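(* Let $X_1,\dots,X_n$ be mutually independent random variables, $X_i$ taking values in a set $D_i$ according to a given distribution, with product distribution $\mu$, and let $A_1,\dots,A_m$ be events, $A_i$ determined by the variables indexed by $\mathrm{vbl}(A_i)\subseteq[n]$. Call distinct $i,j$ dependent if $\mathrm{vbl}(A_i)\cap\mathrm{vbl}(A_j)\ne\emptyset$, and assume that for every dependent pair $i,j$, $\Pr_\mu(A_i\wedge A_j)=0$. Consider the algorithm: draw all variables independently from their distributions; while at least one $A_i$ occurs, let $I$ be the set of indices of occurring events and independently resample all variables in $\bigcup_{i\in I}\mathrm{vbl}(A_i)$; when no $A_i$ occurs, output the current assignment. Then, when the algorithm halts, its output is distributed as $\mu$ conditioned on $\bigwedge_{i=1}^m\overline{A_i}$. *)

From HB Require Import structures.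
From mathcomp Require Import all_boot all_order all_algebra.
From mathcomp Require Import all_classical all_reals.
From mathcomp Require Import ereal sequences.
Set Implicit Arguments. Unset Strict Implicit. Unset Printing Implicit Defensive.
Import Order.TTheory GRing.Theory Num.Theory.
Local Open Scope ring_scope.

(* Variables X_i, i : 'I_n, with X_i taking values in the finite set D i
   with probability mass function p i. *)
Section PRS.
Context {R : realType} {n : nat} {D : 'I_n -> finType}.

Definition assign := {dffun forall i : 'I_n, D i}.

Variable p : forall i : 'I_n, D i -> R.

Definition mu (s : assign) : R := \prod_(i < n) p (s i).

Context {m : nat}.
Variables (vbl : 'I_m -> {set 'I_n}) (A : 'I_m -> pred assign).

Definition good (s : assign) : bool := [forall j, ~~ A j s].

Definition resample_set (s : assign) : {set 'I_n} :=
  \bigcup_(j | A j s) vbl j.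

(* one round of the algorithm from state s: variables in the resample set
   are redrawn independently, the others are kept. *)
Definition trans (s t : assign) : R :=
  if [forall i, (i \notin resample_set s) ==> (t i == s i)]
  then \prod_(i in resample_set s) p (t i) else 0.

(* badmass k t = Pr[ states at rounds 0..k-1 are all bad and state at
   round k is t ]  (round 0 = initial independent draw). *)
Fixpoint badmass (k : nat) : assign -> R :=
  match k with
  | 0 => mu
  | k'.+1 => fun t => \sum_(s | ~~ good s) badmass k' s * trans s t
  end.

(* probability that the algorithm halts exactly after k resampling rounds
   with output t *)
Definition halt_at (k : nat) (t : assign) : R :=
  if good t then badmass k t else 0.

Definition halt_out (t : assign) : \bar R :=
  (\sum_(0 <= k <oo) (halt_at k t)%:E)%E.

Definition halt_prob : \bar R := (\sum_(t : assign) halt_out t)%E.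

Definition cond_mu (t : assign) : R :=
  if good t then mu t / \sum_(s | good s) mu s else 0.

End PRS.

From Pilot Require Import Defs.
From HB Require Import structures.
From mathcomp Require Import all_boot all_order all_algebra.
From mathcomp Require Import all_classical all_reals.
From mathcomp Require Import ereal sequences.
Import Order.TTheory GRing.Theory Num.Theory.
Local Open Scope ring_scope.

(* The mass of the runs that are still bad before round k and sit at t at
   round k factors as mu t * G_k (occurring t).  Detailed balance,
   mu s * trans s t = mu t * rtrans s t, where rtrans s t is the mass of s on
   its resampled variables (when t agrees with s elsewhere), reduces the
   induction step to showing that \sum_s rtrans s t * G (occurring s)
   depends on t only through occurring t.  For positive-mass t, t' with the
   same occurring events, keeping s on its resampled variables and copying t'
   elsewhere is a weight-preserving bijection between the predecessors of t
   and those of t': as dependent events never occur together, it does not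
   change which events occur.  Good outputs have no occurring event, so in
   every round the halting mass is proportional to mu on good states. *)

Section PartialRejectionSampling.
Variables (R : realType) (n m : nat) (D : 'I_n -> finType)
  (p : forall i : 'I_n, D i -> R)
  (vbl : 'I_m -> {set 'I_n}) (A : 'I_m -> pred (@assign n D)).
Hypothesis p_ge0 : forall (i : 'I_n) (x : D i), 0 <= p i x.
Hypothesis A_local : forall (j : 'I_m) (s t : @assign n D),
  (forall i, i \in vbl j -> s i = t i) -> A j s = A j t.
Hypothesis A_extremal : forall {i j : 'I_m},
  i != j -> vbl i :&: vbl j != finset.set0 ->
  \sum_(s : @assign n D | A i s && A j s) mu p s = 0.

Set Implicit Arguments. Unset Strict Implicit. Unset Printing Implicit Defensive.

Local Notation assign := (@assign n D).
Local Notation mu := (mu p).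
Local Notation Res := (resample_set vbl A).
Local Notation trans := (trans p vbl A).
Local Notation badmass := (badmass p vbl A).

Definition occurring (s : assign) : {set 'I_m} := [set j | A j s].

Definition agree_off (s t : assign) : bool :=
  [forall i, (i \notin Res s) ==> (t i == s i)].

Definition redraw_mass (s : assign) : R := \prod_(i in Res s) p i (s i).

Definition rtrans (s t : assign) : R := if agree_off s t then redraw_mass s else 0.

Lemma mu_ge0 (s : assign) : 0 <= mu s.
Proof. exact: prodr_ge0. Qed.

Lemma mu_neq0P (s : assign) : reflect (forall i, p i (s i) != 0) (mu s != 0).
Proof.
rewrite /Defs.mu prodf_seq_neq0.
by apply: (iffP allP) => h i => [|_]; apply: h; rewrite ?mem_index_enum.
Qed.

Lemma mu_split (S : {set 'I_n}) (s : assign) :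
  mu s = (\prod_(i in S) p i (s i)) * \prod_(i in ~: S) p i (s i).
Proof.
rewrite /Defs.mu (bigID (mem S)) /=.
by congr (_ * _); apply: eq_bigl => i; rewrite ?inE.
Qed.

Lemma agree_offE (s t : assign) i : agree_off s t -> i \notin Res s -> t i = s i.
Proof. by move=> /forallP/(_ i)/implyP h /h/eqP. Qed.

Lemma mu_trans (s t : assign) : mu s * trans s t = mu t * rtrans s t.
Proof.
rewrite /trans /rtrans -/(agree_off s t); case: ifP => ag; last by rewrite !mulr0.
rewrite (mu_split (Res s) s) (mu_split (Res s) t) /redraw_mass.
have -> : \prod_(i in ~: Res s) p i (s i) = \prod_(i in ~: Res s) p i (t i).
  by apply: eq_bigr => i; rewrite inE => /(agree_offE ag) ->.
by rewrite mulrAC [RHS]mulrAC [X in _ = X * _]mulrC.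
Qed.

Lemma mem_resample_set (s : assign) i :
  reflect (exists2 j, A j s & i \in vbl j) (i \in Res s).
Proof. by apply: (iffP bigcupP) => -[j]; exists j. Qed.

Lemma redraw_mass_neq0 (s : assign) i : redraw_mass s != 0 -> i \in Res s -> p i (s i) != 0.
Proof. by rewrite /redraw_mass prodf_seq_neq0 => /allP/(_ i (mem_index_enum _))/implyP. Qed.

Lemma dependent_not_both (s : assign) j j0 :
  mu s != 0 -> j != j0 -> ~~ [disjoint vbl j & vbl j0] -> A j0 s -> ~~ A j s.
Proof.
move=> mus neq dep Aj0; apply/negP => Aj.
have := A_extremal neq; rewrite setI_eq0 => /(_ dep)/eqP.
rewrite psumr_eq0 => [|? _]; last exact: mu_ge0.
by move/allP/(_ s (mem_index_enum _)); rewrite Aj Aj0 /= (negbTE mus).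
Qed.

Lemma occurs_agree_on_resample (u s : assign) j :
  mu u != 0 -> mu s != 0 -> {in Res s, forall i, u i = s i} ->
  ~~ [disjoint vbl j & Res s] -> A j u = A j s.
Proof.
move=> muu mus eq_us; rewrite -setI_eq0 => /set0Pn[i].
rewrite inE => /andP[ij /mem_resample_set[j0 Aj0s ij0]].
have Aj0u : A j0 u.
  by rewrite (@A_local j0 u s) // => k kj0; apply/eq_us/mem_resample_set; exists j0.
have [-> | neq] := eqVneq j j0; first by rewrite Aj0u Aj0s.
have dep : ~~ [disjoint vbl j & vbl j0].
  by rewrite -setI_eq0; apply/set0Pn; exists i; rewrite inE ij ij0.
by rewrite !(negbTE (dependent_not_both _ neq dep _)).
Qed.

Definition graft (t' s : assign) : assign :=
  finfun (fun i : 'I_n => if i \in Res s then s i else t' i).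

Lemma graftE (t' s : assign) i : graft t' s i = if i \in Res s then s i else t' i.
Proof. by rewrite ffunE. Qed.

Definition prestate (t s : assign) : bool :=
  [&& ~~ good A s, agree_off s t & redraw_mass s != 0].

Lemma prestate_mu_neq0 (t s : assign) : mu t != 0 -> prestate t s -> mu s != 0.
Proof.
move=> /mu_neq0P mut /and3P[_ ag rms]; apply/mu_neq0P => i.
have [/(redraw_mass_neq0 rms) // | notR] := boolP (i \in Res s).
by rewrite -(agree_offE ag notR).
Qed.

Lemma graft_mu_neq0 (t' s : assign) :
  mu t' != 0 -> redraw_mass s != 0 -> mu (graft t' s) != 0.
Proof.
move=> /mu_neq0P mut' rms; apply/mu_neq0P => i; rewrite graftE.
by case: ifP => [/(redraw_mass_neq0 rms)|].
Qed.

Section Graft.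
Variables t t' s : assign.
Hypotheses (mut : mu t != 0) (mut' : mu t' != 0).
Hypotheses (occ_tt' : occurring t = occurring t') (pre : prestate t s).

Lemma occurs_graft j : A j (graft t' s) = A j s.
Proof.
have /and3P[_ ag rms] := pre.
have [disj | meet] := boolP [disjoint vbl j & Res s]; last first.
  apply: occurs_agree_on_resample meet; rewrite ?graft_mu_neq0 //.
    exact: prestate_mu_neq0 pre.
  by move=> i iR; rewrite graftE iR.
have offR i : i \in vbl j -> i \notin Res s by move/(disjointFr disj) ->.
rewrite (@A_local j _ t') => [|i /offR/negbTE ij]; last by rewrite graftE ij.
rewrite [RHS](@A_local j _ t) => [|i /offR/(agree_offE ag) //].
by move/setP: occ_tt' => /(_ j); rewrite !inE.
Qed.

Lemma resample_set_graft : Res (graft t' s) = Res s.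
Proof. by apply: eq_bigl => j; rewrite occurs_graft. Qed.

Lemma prestate_graft :
  [/\ prestate t' (graft t' s), graft t (graft t' s) = s,
      rtrans (graft t' s) t' = rtrans s t & occurring (graft t' s) = occurring s].
Proof.
have /and3P[bad ag rms] := pre.
have rm_graft : redraw_mass (graft t' s) = redraw_mass s.
  by rewrite /redraw_mass resample_set_graft; apply: eq_bigr => i iR; rewrite graftE iR.
have ag' : agree_off (graft t' s) t'.
  by apply/forallP => i; apply/implyP; rewrite resample_set_graft graftE => /negbTE ->.
split.
- apply/and3P; split; rewrite ?rm_graft //; apply: contra bad => /forallP good_g.
  by apply/forallP => j; rewrite -occurs_graft.
- apply/ffunP => i; rewrite !graftE resample_set_graft.
  by case: ifP => [-> // | /negbT /(agree_offE ag)].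
- by rewrite /rtrans ag ag' rm_graft.
- by apply/setP => j; rewrite !inE occurs_graft.
Qed.

End Graft.

Definition back_sum (G : {set 'I_m} -> R) (t : assign) : R :=
  \sum_(s | ~~ good A s) rtrans s t * G (occurring s).

Lemma back_sum_prestate G (t : assign) :
  back_sum G t = \sum_(s | prestate t s) rtrans s t * G (occurring s).
Proof.
rewrite /back_sum big_mkcond [RHS]big_mkcond; apply: eq_bigr => s _.
rewrite /prestate /rtrans; case: (~~ good A s) (agree_off s t) => [] [] //=.
  by case: eqP => [->|]; rewrite ?mul0r.
by rewrite mul0r.
Qed.

Lemma back_sum_occurring G (t t' : assign) : mu t != 0 -> mu t' != 0 ->
  occurring t = occurring t' -> back_sum G t = back_sum G t'.
Proof.
move=> mut mut' occ; rewrite !back_sum_prestate.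
rewrite (reindex_onto (graft t) (graft t')) => [|s pre]; last first.
  by case: (prestate_graft mut mut' occ pre).
apply: eq_big => s.
  apply/andP/idP => [[pre /eqP <-] | pre]; first by case: (prestate_graft mut mut' occ pre).
  by case: (prestate_graft mut' mut (esym occ) pre) => -> ->.
move=> /andP[pre /eqP gs].
have pre' : prestate t' s by rewrite -gs; case: (prestate_graft mut mut' occ pre).
by case: (prestate_graft mut' mut (esym occ) pre') => _ _ -> ->.
Qed.

Lemma badmass_ge0 k (t : assign) : 0 <= badmass k t.
Proof.
elim: k t => [|k IH] t /=; first exact: mu_ge0.
apply: sumr_ge0 => s _; apply: mulr_ge0 => //.
by rewrite /Defs.trans; case: ifP => // _; apply: prodr_ge0.
Qed.

Lemma badmass_factor k :
  exists G : {set 'I_m} -> R, forall t, badmass k t = mu t * G (occurring t).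
Proof.
elim: k => [|k [G badmassE]]; first by exists (fun=> 1) => t; rewrite mulr1.
have step t : badmass k.+1 t = mu t * back_sum G t.
  rewrite /= /back_sum mulr_sumr; apply: eq_bigr => s _.
  by rewrite badmassE mulrAC mu_trans mulrA mulrAC -mulrA.
exists (fun J => if [pick t | (occurring t == J) && (mu t != 0)] is Some t0
                 then back_sum G t0 else 0) => t.
rewrite step; have [-> | mut] := eqVneq (mu t) 0; first by rewrite !mul0r.
case: pickP => [t0 /andP[/eqP occ mut0] | /(_ t)]; last by rewrite eqxx mut.
by rewrite (back_sum_occurring G mut mut0 (esym occ)).
Qed.

Definition halt_weight k : R :=
  if [pick t | good A t && (mu t != 0)] is Some t0 then badmass k t0 / mu t0 else 0.

Lemma halt_weight_ge0 k : 0 <= halt_weight k.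
Proof.
rewrite /halt_weight; case: pickP => // t0 _.
by rewrite divr_ge0 ?badmass_ge0 ?mu_ge0.
Qed.

Lemma occurring_good (t : assign) : good A t -> occurring t = finset.set0.
Proof. by move=> /forallP good_t; apply/setP => j; rewrite !inE (negbTE (good_t j)). Qed.

Lemma halt_atE k (t : assign) :
  halt_at p vbl A k t = if good A t then mu t * halt_weight k else 0.
Proof.
rewrite /halt_at; case: ifP => // good_t; have [G badmassE] := badmass_factor k.
rewrite badmassE /halt_weight; have [-> | mut] := eqVneq (mu t) 0; first by rewrite !mul0r.
case: pickP => [t0 /andP[good_t0 mut0] | /(_ t)]; last by rewrite good_t mut.
by rewrite badmassE mulrAC mulfV // mul1r !occurring_good.
Qed.

Definition halt_weight_sum : \bar R := (\sum_(0 <= k <oo) (halt_weight k)%:E)%E.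

Lemma halt_outE (t : assign) :
  halt_out p vbl A t = if good A t then ((mu t)%:E * halt_weight_sum)%E else 0%E.
Proof.
rewrite /halt_out; case: ifP => good_t; last first.
  by apply: eseries0 => k _ _; rewrite halt_atE good_t.
rewrite -nneseriesZl => [|k _]; last by rewrite lee_fin halt_weight_ge0.
by apply: eq_eseriesr => k _; rewrite halt_atE good_t EFinM.
Qed.

Lemma halt_probE :
  halt_prob p vbl A = ((\sum_(s | good A s) mu s)%:E * halt_weight_sum)%E.
Proof.
rewrite /halt_prob (eq_bigr _ (fun t _ => halt_outE t)) -big_mkcond /= -sumEFin.
by rewrite ge0_sume_distrl // => t _; rewrite lee_fin mu_ge0.
Qed.

End PartialRejectionSampling.

Theorem theorem8 (R : realType) (n m : nat) (D : 'I_n -> finType)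
  (p : forall i : 'I_n, D i -> R)
  (vbl : 'I_m -> {set 'I_n}) (A : 'I_m -> pred (@assign n D))
  (hp0 : forall (i : 'I_n) (x : D i), 0 <= p i x)
  (hp1 : forall i : 'I_n, \sum_(x : D i) p i x = 1)
  (hA : forall (j : 'I_m) (s t : @assign n D),
          (forall i, i \in vbl j -> s i = t i) -> A j s = A j t)
  (hdep : forall i j : 'I_m, i != j -> vbl i :&: vbl j != finset.set0 ->
          \sum_(s : @assign n D | A i s && A j s) mu p s = 0)
  (hhalt : (0 < halt_prob p vbl A)%E) :
  forall t : @assign n D,
    halt_out p vbl A t = (halt_prob p vbl A * (cond_mu p A t)%:E)%E.
Proof.
move=> t; rewrite (halt_outE hp0 hA hdep) (halt_probE hp0 hA hdep) /cond_mu.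
set Z := \sum_(s | good A s) mu p s; case: ifP => _; last by rewrite mule0.
have Z_neq0 : Z != 0.
  by apply: contraTneq hhalt => Z0; rewrite (halt_probE hp0 hA hdep) -/Z Z0 mul0e ltxx.
by rewrite muleAC -EFinM [Z * _]mulrC divfK.
Qed.
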